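(* Let $\mathcal{H}_\xi$, $C$, $\Omega$, $D$, $\gamma$ be as in the context. Then \[ D^2=\Omega\otimes1-2\int_{|v|=1}\tilde\xi(v\otimes\bar v)\otimes\gamma(v\otimes\bar v)\,dv \quad\text{in }\mathcal{H}_\xi\otimes C. \]
   Context: Let $\mathfrak{g}=\mathfrak{gl}_n(\mathbb{C})$ ($n\ge1$), $H=\mathcal{U}(\mathfrak{g})$, $\mathfrak{h}=\mathbb{C}^n$ the standard module, $\mathfrak{h}^*$ its dual with natural pairing $(\cdot,\cdot)$, $V=\mathfrak{h}\oplus\mathfrak{h}^*$. Fix the standard basis $y_1,\dots,y_n$ of $\mathfrak{h}$ and dual basis $x_1,\dots,x_n$; $E_{ij}$ sends $y_j$ to $y_i$. For $v\in\mathfrak{h}$, $v\otimes\bar v=\sum_{i,j}v_i\bar v_jE_{ij}\in\mathfrak{gl}_n$ (the map $w\mapsto v\sum_k w_k\bar v_k$); for a polynomial $q$, $q(v\otimes\bar v)$ is the corresponding element of $\mathcal{U}(\mathfrak{gl}_n)$; $\int_{|v|=1}\cdots dv$ is integration over the Euclidean unit sphere of $\mathbb{C}^n$ with respect to surface measure. Let $\xi$ be a polynomial, $\tilde\xi(z)=\frac1{2\pi^n}\partial^n(z^n\xi(z))$, and define $\kappa:V\wedge V\to H$ by $\kappa(x,x')=\kappa(y,y')=0$, $\kappa(y,x)=\int_{|v|=1}(x,(v\otimes\bar v)\cdot y)\tilde\xi(v\otimes\bar v)\,dv$ for $x,x'\in\mathfrak{h}^*,y,y'\in\mathfrak{h}$.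 $\mathcal{H}_\xi=(T(V)\rtimes H)/I_\kappa$ with $I_\kappa$ generated by $uw-wu-\kappa(u,w)$, $u,w\in V$. Let $C=C(V)$ be the Clifford algebra for the symmetric form $\langle x+y,x'+y'\rangle=(x,y')+(x',y)$, with relations $uw+wu=2\langle u,w\rangle$. $\Omega=\sum_i(x_iy_i+y_ix_i)$, $D=\sum_i(x_i\otimes y_i+y_i\otimes x_i)\in\mathcal{H}_\xi\otimes C$, and $\gamma:\mathcal{U}(\mathfrak{gl}_n)\to C$ is the algebra map with $\gamma(E_{ij})=\frac14(y_ix_j-x_jy_i)$. *)

From HB Require Import structures.
From mathcomp Require Import all_boot all_order all_algebra.
From mathcomp Require Import complex.
From mathcomp Require Import all_classical all_reals all_analysis.

Set Implicit Arguments.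
Unset Strict Implicit.
Unset Printing Implicit Defensive.
Import Order.TTheory GRing.Theory Num.Theory.
Local Open Scope ring_scope.

Section Defs.
Variable R : realType.
Local Notation C := (complex R).

Fixpoint iint (d : nat) (f : seq R -> R) : R :=
  if d is d'.+1 then
    Rintegral lebesgue_measure setT (fun t : R => iint d' (fun s => f (t :: s)))
  else f [::].

(* Identification R^{2n} = C^n :  v_k = s_k + i s_{n+k}. *)
Definition cvec_of (n : nat) (s : seq R) : 'I_n -> C :=
  fun k => Complex s`_k s`_(n + k).

Definition sqnorm (n : nat) (s : seq R) : R := \sum_(k < 2 * n) s`_k ^+ 2.

(* Integral of h : C^n -> R over the Euclidean unit sphere of C^n = R^{2n}
   w.r.t. surface measure sigma, via the cone-measure formula
     sigma(A) = 2n * lambda_{2n}({ r a | a in A, 0 < r <= 1 }),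
   i.e.  \int_{S} h dsigma = 2n \int_{0<|x|<=1} h(x/|x|) dx.            *)
Definition sphintR (n : nat) (h : ('I_n -> C) -> R) : R :=
  (2 * n)%:R * iint (2 * n) (fun s =>
    let r2 := sqnorm n s in
    if (0 < r2) && (r2 <= 1) then
      h (fun k => @cvec_of n s k / (Num.sqrt r2)%:C%C)
    else 0).

Definition sphint (n : nat) (g : ('I_n -> C) -> C) : C :=
  Complex (sphintR (fun v => complex.Re (g v))) (sphintR (fun v => complex.Im (g v))).

Definition xitilde (n : nat) (xi : {poly C}) : {poly C} :=
  ((2 * pi ^+ n)^-1)%:C%C *: ((('X ^+ n * xi) ^`(n))).

(* Inside a C-algebra A, with e i j the image of E_ij in A:
   the image of v (x) vbar = \sum_{i,j} v_i conj(v_j) E_ij.             *)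
Definition vv (n : nat) (A : algType C) (e : 'I_n -> 'I_n -> A)
  (v : 'I_n -> C) : A :=
  \sum_(i < n) \sum_(j < n) (v i * conjc (v j)) *: e i j.

(* The A-valued integral  \int_{|v|=1} w(v) * xi~(v (x) vbar) dv  for a
   scalar weight w : C^n -> C, where xi~(v (x) vbar) is evaluated in the
   (noncommutative) algebra generated by the e i j.  It is computed by
   expanding the integrand into a finite C-linear combination of fixed
   elements of A with scalar polynomial coefficient functions and
   integrating these coefficients:
     w(v) xi~(M v) = \sum_k c_k w(v) (\sum_{(i,j)} v_i conj(v_j) e_ij)^k
                   = \sum_k c_k \sum_{s : 'I_k -> 'I_n * 'I_n}
                        (w(v) \prod_l v_{s_l.1} conj(v_{s_l.2}))
                        *: \prod_l e_{s_l}.                           *)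
Definition xi_int (n : nat) (A : algType C) (e : 'I_n -> 'I_n -> A)
  (xi : {poly C}) (w : ('I_n -> C) -> C) : A :=
  let xt := xitilde n xi in
  \sum_(k < size xt) xt`_k *:
    \sum_(s : {ffun 'I_k -> 'I_n * 'I_n})
       sphint (fun v => w v * \prod_(l < k) (v (s l).1 * conjc (v (s l).2)))
       *: \prod_(l < k) e (s l).1 (s l).2.

(* Image of gamma(E_pq) = 1/4 (y_p x_q - x_q y_p) in A, where cx, cy are
   the images of the Clifford generators 1 (x) x_i, 1 (x) y_i.            *)
Definition gammaE (n : nat) (A : algType C) (cx cy : 'I_n -> A) (p q : 'I_n) : A :=
  (4%:R : C)^-1 *: (cy p * cx q - cx q * cy p).

(* Images of D = \sum_i (x_i (x) y_i + y_i (x) x_i) and of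
   Omega (x) 1 = \sum_i (x_i y_i + y_i x_i) (x) 1.                       *)
Definition Dirac (n : nat) (A : algType C) (x y cx cy : 'I_n -> A) : A :=
  \sum_(i < n) (x i * cy i + y i * cx i).
Definition Omega (n : nat) (A : algType C) (x y : 'I_n -> A) : A :=
  \sum_(i < n) (x i * y i + y i * x i).
End Defs.

From HB Require Import structures.
From mathcomp Require Import all_boot all_order all_algebra.
From mathcomp Require Import complex.
From mathcomp Require Import all_classical all_reals all_analysis.
From mathcomp Require Import ring.
Import Order.TTheory GRing.Theory Num.Theory.
Local Open Scope ring_scope.

(* Because the two tensor factors commute, D^2 is the sum over (i, j) of
   x_i x_j (x) y_i y_j, y_i y_j (x) x_i x_j and two mixed terms.  The first
   two sums vanish since their summands are antisymmetric in (i, j): the x_i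
   (resp. y_i) commute in H_xi but anticommute in C.  In the mixed terms the
   Clifford relation x_q y_p = 2 delta_pq - y_p x_q gives
     x_p y_q (x) y_p x_q + y_q x_p (x) x_q y_p
       = delta_pq (x_p y_q + y_q x_p) (x) 1 - 2 [y_q, x_p] (x) gamma(E_pq),
   and summing over p, q yields Omega (x) 1 - 2 sum kappa(y_q, x_p) (x) gamma(E_pq),
   which is the integral by the definition of kappa and linearity of gamma. *)

Lemma mulrACA_comm {A : pzRingType} (a b c d : A) :
  GRing.comm b c -> a * b * (c * d) = a * c * (b * d).
Proof. by move=> bc; rewrite mulrA -(mulrA a) bc mulrA -mulrA. Qed.

Lemma sumr_antisym_eq0 (K : numFieldType) (V : lmodType K) (I : finType)
    (F : I -> I -> V) :
  (forall i j, F j i = - F i j) -> \sum_i \sum_j F i j = 0.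
Proof.
move=> F_antisym; set S := \sum_i _.
have S_opp : S = - S.
  rewrite {1}/S exchange_big -sumrN; apply: eq_bigr => i _.
  by rewrite -sumrN; apply: eq_bigr => j _.
have : (2%:R : K) *: S = 0 by rewrite scaler_nat mulr2n {1}S_opp addNr.
by move/eqP; rewrite scaler_eq0 pnatr_eq0 => /eqP.
Qed.

Lemma sumr_delta_natr (A : pzSemiRingType) (I : finType) (F : I -> A) (p : I) :
  \sum_q F q * (p == q)%:R = F p.
Proof.
under eq_bigr => q _ do rewrite mulr_natr mulrb eq_sym.
by rewrite -big_mkcond big_pred1_eq.
Qed.

Section DiracSquare.

Variables (R : realType) (A : algType R[i]) (n : nat) (x y cx cy : 'I_n -> A).

Hypothesis x_comm : forall i j, GRing.comm (x i) (x j).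
Hypothesis y_comm : forall i j, GRing.comm (y i) (y j).
Hypothesis cx_anticomm : forall i j, cx i * cx j = - (cx j * cx i).
Hypothesis cy_anticomm : forall i j, cy i * cy j = - (cy j * cy i).
Hypothesis cx_cy : forall i j, cx i * cy j + cy j * cx i = (i == j)%:R *+ 2.
Hypothesis x_comm_cx : forall i k, GRing.comm (x i) (cx k).
Hypothesis x_comm_cy : forall i k, GRing.comm (x i) (cy k).
Hypothesis y_comm_cx : forall i k, GRing.comm (y i) (cx k).
Hypothesis y_comm_cy : forall i k, GRing.comm (y i) (cy k).

Let mixed p q := x p * y q * (cy p * cx q) + y q * x p * (cx q * cy p).

Lemma Dirac_sqr_mixed :
  Dirac x y cx cy * Dirac x y cx cy = \sum_p \sum_q mixed p q.
Proof.
have expand i j : (x i * cy i + y i * cx i) * (x j * cy j + y j * cx j)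
    = (x i * x j * (cy i * cy j) + y i * y j * (cx i * cx j))
      + (x i * y j * (cy i * cx j) + y i * x j * (cx i * cy j)).
  rewrite mulrDr !mulrDl !(mulrACA_comm (x i) (cy i)) ?(mulrACA_comm (y i) (cx i));
    try exact: commr_sym.
  by rewrite addrACA [X in _ + X]addrC addrACA.
rewrite /Dirac mulr_suml; under eq_bigr => i _ do rewrite mulr_sumr.
under eq_bigr => i _ do under eq_bigr => j _ do rewrite expand.
under eq_bigr => i _ do rewrite big_split /=.
rewrite big_split /= sumr_antisym_eq0 ?add0r => [|i j]; last first.
  by rewrite x_comm y_comm cy_anticomm cx_anticomm !mulrN opprD.
under eq_bigr => i _ do rewrite big_split /=.
rewrite big_split /= [X in _ + X]exchange_big -big_split.
by apply: eq_bigr => i _; rewrite -big_split.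
Qed.

Lemma mixed_gammaE p q :
  mixed p q = (x p * y q + y q * x p) * (p == q)%:R
              - 2%:R *: ((y q * x p - x p * y q) * gammaE cx cy p q).
Proof.
set a := x p * y q; set b := y q * x p; set c := cy p * cx q.
set r : A := (p == q)%:R.
have cx_cy_swap : cx q * cy p = r *+ 2 - c.
  by apply: (canRL (addrK _)); rewrite cx_cy eq_sym.
have gamma_c : 2%:R *: gammaE cx cy p q = c - r.
  rewrite /gammaE -/c cx_cy_swap opprB addrA -mulr2n -mulrnBl scalerA.
  rewrite -scalerMnr scalerMnl [X in X *: _](_ : _ = 1) ?scale1r //.
  by field.
rewrite /mixed -/a -/b -/c cx_cy_swap scalerAr gamma_c.
rewrite !mulrBr mulrDl !mulrBl mulrnAr mulr2n opprB.
by rewrite opprB [RHS]addrACA [a * r + _]addrC subrK addrA [RHS]addrCA.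
Qed.

Lemma Dirac_sqr :
  Dirac x y cx cy * Dirac x y cx cy
  = Omega x y - 2%:R *: \sum_p \sum_q
      (y q * x p - x p * y q) * gammaE cx cy p q.
Proof.
rewrite Dirac_sqr_mixed scaler_sumr -sumrB; apply: eq_bigr => p _.
under eq_bigr => q _ do rewrite mixed_gammaE.
by rewrite sumrB sumr_delta_natr scaler_sumr.
Qed.

End DiracSquare.

(* H_xi (x) C is presented by the generators E_ij (x) 1, x_i (x) 1, y_i (x) 1,
   1 (x) x_i, 1 (x) y_i with the relations below; an identity holds in
   H_xi (x) C iff it holds for the images of these generators in every
   C-algebra A satisfying these relations. *)
Theorem mainTheorem2 (R : realType) (n : nat) (xi : {poly R[i]})
  (A : algType R[i]) (e : 'I_n -> 'I_n -> A) (x y cx cy : 'I_n -> A) :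
  (0 < n)%N ->
  (* U(gl_n) relations *)
  (forall i j k l : 'I_n, e i j * e k l - e k l * e i j
      = (j == k)%:R *: e i l - (l == i)%:R *: e k j) ->
  (* smash product relations: E_ij . y_k = delta_jk y_i, E_ij . x_k = - delta_ki x_j *)
  (forall i j k : 'I_n, e i j * y k - y k * e i j = (j == k)%:R *: y i) ->
  (forall i j k : 'I_n, e i j * x k - x k * e i j = - ((k == i)%:R *: x j)) ->
  (* relations of I_kappa *)
  (forall i j : 'I_n, x i * x j - x j * x i = 0) ->
  (forall i j : 'I_n, y i * y j - y j * y i = 0) ->
  (forall i j : 'I_n, y j * x i - x i * y j
      = xi_int e xi (fun v => v i * conjc (v j))) ->
  (* Clifford relations *)
  (forall i j : 'I_n, cx i * cx j + cx j * cx i = 0) ->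
  (forall i j : 'I_n, cy i * cy j + cy j * cy i = 0) ->
  (forall i j : 'I_n, cx i * cy j + cy j * cx i = (i == j)%:R *+ 2) ->
  (* the two tensor factors commute *)
  (forall i j k : 'I_n, e i j * cx k = cx k * e i j /\ e i j * cy k = cy k * e i j) ->
  (forall i k : 'I_n, x i * cx k = cx k * x i /\ x i * cy k = cy k * x i) ->
  (forall i k : 'I_n, y i * cx k = cx k * y i /\ y i * cy k = cy k * y i) ->
  Dirac x y cx cy * Dirac x y cx cy
  = Omega x y - 2%:R *: \sum_(p < n) \sum_(q < n)
        xi_int e xi (fun v => v p * conjc (v q)) * gammaE cx cy p q.
Proof.
move=> _ _ _ _ x_comm y_comm kappa_yx cx_anti cy_anti cx_cy _ x_comm_c y_comm_c.
rewrite (@Dirac_sqr _ _ _ x y cx cy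
  (fun i j => subr0_eq (x_comm i j)) (fun i j => subr0_eq (y_comm i j))
  (fun i j => esym (addr0_eq (cx_anti j i))) (fun i j => esym (addr0_eq (cy_anti j i)))
  cx_cy (fun i k => (x_comm_c i k).1) (fun i k => (x_comm_c i k).2)
  (fun i k => (y_comm_c i k).1) (fun i k => (y_comm_c i k).2)).
by under eq_bigr => p _ do under eq_bigr => q _ do rewrite kappa_yx.
Qed.
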